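(* Let $K\subset\mathbb{R}^n$ be a nonempty compact set and $H$ a linear subspace of $\mathbb{R}^n$ with $1\le\dim H\le n-1$. Then the sequence $K_m:=M_H^mK$ ($M_H$ applied $m$ times) converges in the Hausdorff metric to the $H$-symmetric compact convex set \[L=\mathrm{conv}(M_HK).\]
   Context: For a linear subspace $H$, $R_Hx=2(x|H)-x$ is the reflection with respect to $H$ ($x|H$ the orthogonal projection). The Minkowski symmetrization is $M_HC:=\frac12(C+R_HC)$, with Minkowski sum $X+Y=\{x+y:x\in X,y\in Y\}$ and $tX=\{tx:x\in X\}$. $M_H^m=M_H\circ\cdots\circ M_H$ ($m$ times). $\mathrm{conv}$ denotes convex hull. *)

From HB Require Import structures.
From mathcomp Require Import all_boot all_order all_algebra.
From mathcomp Require Import all_classical all_reals all_analysis.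
Set Implicit Arguments. Unset Strict Implicit. Unset Printing Implicit Defensive.
Import Order.TTheory GRing.Theory Num.Theory.
Import numFieldNormedType.Exports.
Local Open Scope classical_set_scope.
Local Open Scope ring_scope.

Section Defs.
Variables (R : realType) (n : nat).
Notation V := 'rV[R]_n.

Definition dotv (u v : V) : R := \sum_(i < n) u ord0 i * v ord0 i.
Definition enorm (u : V) : R := Num.sqrt (dotv u u).

(* A linear subspace H of R^n is represented as the row space of a matrix
   H : 'M_n; membership is (v <= H)%MS and dim H = \rank H. *)
Definition in_sub (H : 'M[R]_n) (v : V) : Prop := (v <= H)%MS.

Definition proj (H : 'M[R]_n) (x : V) : V :=
  xget 0 [set p | in_sub H p /\ forall h, in_sub H h -> dotv (x - p) h = 0].

Definition refl (H : 'M[R]_n) (x : V) : V := 2%:R *: proj H x - x.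

Definition msum (X Y : set V) : set V := [set x + y | x in X & y in Y].
Definition mscale (t : R) (X : set V) : set V := [set t *: x | x in X].

Definition MH (H : 'M[R]_n) (C : set V) : set V :=
  mscale (2%:R^-1) (msum C (refl H @` C)).

Definition convhull (A : set V) : set V :=
  [set x | exists (k : nat) (w : 'I_k -> R) (p : 'I_k -> V),
      (forall i, 0 <= w i) /\ \sum_(i < k) w i = 1 /\
      (forall i, A (p i)) /\ x = \sum_(i < k) w i *: p i].

Definition is_convex (A : set V) : Prop :=
  forall x y t, A x -> A y -> 0 <= t <= 1 -> A ((1 - t) *: x + t *: y).

Definition H_symmetric (H : 'M[R]_n) (A : set V) : Prop := refl H @` A = A.

Definition eball : set V := [set u | enorm u <= 1].

Definition hausdorff (A B : set V) : R :=
  inf [set e : R | 0 <= e /\ A `<=` msum B (mscale e eball)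
                          /\ B `<=` msum A (mscale e eball)].

End Defs.

(* [L] is convex and, [R_H] being a linear involution, [R_H]-invariant; hence
   [M_H X ⊆ L] whenever [X ⊆ L], and every [M_H^m K] with [m ≥ 1] lies in [L].
   Conversely, [M_H X] contains [(a + b)/2] whenever [a] and [R_H b] lie in [X], and
   [M_H^m K] is [R_H]-invariant for [m ≥ 1], so [M_H^(j+1) K] contains every average
   of [2^j] (not necessarily distinct) points of [M_H K]. By Carathéodory a point of
   [L] is a convex combination of [n + 1] points of [M_H K]; rounding the weights to
   multiples of [2^-j] moves it by [O(2^-j)], which bounds the Hausdorff distance.
   Carathéodory also exhibits [L] as a continuous image of a compact set. *)

From Pilot Require Import Defs.
From HB Require Import structures.
From mathcomp Require Import all_boot all_order all_algebra.
From mathcomp Require Import all_classical all_reals all_analysis.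
From mathcomp Require Import zify.
Set Implicit Arguments. Unset Strict Implicit. Unset Printing Implicit Defensive.
Import Order.TTheory GRing.Theory Num.Theory.
Import numFieldNormedType.Exports.
Local Open Scope classical_set_scope.
Local Open Scope ring_scope.

Lemma mulmx_continuous (R : realType) p q (A : 'M[R]_(p, q)) :
  continuous (fun u : 'rV[R]_p => u *m A).
Proof.
have -> : (fun u : 'rV[R]_p => u *m A) = fun u => \sum_i u ord0 i *: row i A.
  by apply/funext => u; rewrite mulmx_sum_row.
apply: continuous_big => [|i _ u]; first exact: add_continuous.
by apply: continuousZr_tmp; exact: coord_continuous.
Qed.

Lemma mulmx_trmx_self_eq0 (R : realType) m (u : 'rV[R]_m) :
  (u *m u^T) ord0 ord0 = 0 -> u = 0.
Proof.
rewrite mxE => u2_0; apply/rowP => i; rewrite mxE.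
have u2_ge0 j : predT j -> 0 <= u ord0 j * u^T j ord0.
  by rewrite mxE -expr2 sqr_ge0.
have /eqP := @psumr_eq0P _ _ predT _ u2_ge0 u2_0 i isT.
by rewrite mxE mulf_eq0 orbb => /eqP.
Qed.

Section Reflection.
Variables (R : realType) (n : nat) (H : 'M[R]_n).
Notation V := 'rV[R]_n.

Lemma dotvE (u v : V) : dotv u v = (u *m v^T) ord0 ord0.
Proof. by rewrite /dotv mxE; apply: eq_bigr => i _; rewrite mxE. Qed.

Lemma dotv_self_eq0 (u : V) : dotv u u = 0 -> u = 0.
Proof. by rewrite dotvE => /mulmx_trmx_self_eq0. Qed.

Lemma dotvBl (a b c : V) : dotv (a - b) c = dotv a c - dotv b c.
Proof. by rewrite /dotv -sumrB; apply: eq_bigr => i _; rewrite !mxE mulrBl. Qed.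

Let B := row_base H.
Let G := B *m B^T.

Lemma gram_unit : G \in unitmx.
Proof.
rewrite -row_free_unit -kermx_eq0; apply/eqP/row_matrixP => i; rewrite row0.
set v := row i (kermx G).
have vG : v *m G = 0 by apply/sub_kermxP; exact: row_sub.
have vB0 : v *m B = 0.
  apply: mulmx_trmx_self_eq0.
  by rewrite trmx_mul mulmxA -(mulmxA v) -/G vG mul0mx mxE.
by apply: (row_free_inj (row_base_free H)); rewrite /= vB0 mul0mx.
Qed.

(* The orthogonal projection onto the row space of [B] is [B^T (B B^T)^-1 B]. *)
Definition projmx : 'M[R]_n := B^T *m invmx G *m B.

Definition reflmx : 'M[R]_n := 2%:R *: projmx - 1%:M.

Lemma projmx_idem : projmx *m projmx = projmx.
Proof.
have -> : projmx *m projmx = B^T *m invmx G *m G *m invmx G *m B.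
  by rewrite /projmx /G !mulmxA.
by rewrite mulmxK ?gram_unit.
Qed.

Lemma projmx_sub (x : V) : in_sub H (x *m projmx).
Proof.
rewrite /in_sub /projmx mulmxA.
by apply: submx_trans (submxMl _ B) _; rewrite eq_row_base.
Qed.

Lemma projmx_orth (x h : V) : in_sub H h -> dotv (x - x *m projmx) h = 0.
Proof.
rewrite /in_sub -(eq_row_base H) => /submxP [a ->].
have PBT : projmx *m B^T = B^T.
  have -> : projmx *m B^T = B^T *m (invmx G *m G) by rewrite /projmx /G !mulmxA.
  by rewrite mulVmx ?mulmx1 ?gram_unit.
by rewrite dotvE trmx_mul mulmxA mulmxBl -mulmxA PBT subrr mul0mx mxE.
Qed.

Lemma projE (x : V) : Defs.proj H x = x *m projmx.
Proof.
rewrite /Defs.proj; set S := [set p | _ /\ _].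
have SP : S (x *m projmx) by split; [exact: projmx_sub | exact: projmx_orth].
have S_uniq p : S p -> p = x *m projmx.
  move=> [pH p_orth]; apply/eqP; rewrite -subr_eq0; apply/eqP/dotv_self_eq0.
  have dH : in_sub H (p - x *m projmx).
    by rewrite /in_sub addmx_sub // eqmx_opp; exact: projmx_sub.
  have E : p - x *m projmx = (x - x *m projmx) - (x - p).
    by rewrite opprB [RHS]addrC addrA subrK.
  by rewrite {1}E dotvBl (p_orth _ dH) projmx_orth ?subr0.
by apply: S_uniq; apply: xgetPex; exact: ex_intro SP.
Qed.

Lemma reflE (x : V) : refl H x = x *m reflmx.
Proof. by rewrite /refl projE /reflmx mulmxBr mulmx1 scalemxAr. Qed.

Lemma reflK : involutive (refl H).
Proof.
move=> x; rewrite /refl !projE mulmxBl -scalemxAl -mulmxA projmx_idem.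
set y := x *m projmx.
rewrite scalerBr scalerA opprB addrA -natrM (_ : 2 * 2 = 2 + 2)%N // natrD.
by rewrite scalerDl addrK addrAC subrr add0r.
Qed.

Lemma reflD (a b : V) : refl H (a + b) = refl H a + refl H b.
Proof. by rewrite !reflE mulmxDl. Qed.

Lemma reflZ t (a : V) : refl H (t *: a) = t *: refl H a.
Proof. by rewrite !reflE scalemxAl. Qed.

Lemma refl_continuous : continuous (refl H).
Proof.
have -> : refl H = fun x => x *m reflmx by apply/funext => x; rewrite reflE.
exact: mulmx_continuous.
Qed.

End Reflection.

Definition catf T k1 k2 (f : 'I_k1 -> T) (g : 'I_k2 -> T) : 'I_(k1 + k2) -> T :=
  fun i => match fintype.split i with inl a => f a | inr b => g b end.
Arguments catf {T k1 k2}.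

Lemma catfL T k1 k2 f g a : @catf T k1 k2 f g (lshift k2 a) = f a.
Proof. by rewrite /catf (unsplitK (inl a)). Qed.

Lemma catfR T k1 k2 f g b : @catf T k1 k2 f g (rshift k1 b) = g b.
Proof. by rewrite /catf (unsplitK (inr b)). Qed.

Section ConvexHull.
Variables (R : realType) (n : nat).
Notation V := 'rV[R]_n.
Implicit Types (A : set V) (x : V).

Definition convk k A : set V :=
  [set x | exists (w : 'I_k -> R) (p : 'I_k -> V),
      (forall i, 0 <= w i) /\ \sum_(i < k) w i = 1 /\
      (forall i, A (p i)) /\ x = \sum_(i < k) w i *: p i].

Lemma convhullP A x : convhull A x <-> exists k, convk k A x.
Proof. by split => [[k [w [p h]]]|[k [w [p h]]]]; exists k, w, p. Qed.

Lemma convk1 A x : convk 1 A x <-> A x.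
Proof.
split => [[w [p [_ [w1 [Ap ->]]]]]|Ax].
  by move: w1; rewrite !big_ord1 => ->; rewrite scale1r.
by exists (fun=> 1), (fun=> x); rewrite !big_ord1 scale1r.
Qed.

Lemma sub_convhull A : A `<=` convhull A.
Proof. by move=> x /convk1 Ax; apply/convhullP; exists 1%N. Qed.

Lemma convex_convhull A : is_convex (convhull A).
Proof.
move=> x y t /convhullP[k1 [w1 [p1 [w1_ge0 [w1_sum [Ap1 ->]]]]]].
move=> /convhullP[k2 [w2 [p2 [w2_ge0 [w2_sum [Ap2 ->]]]]]] /andP[t_ge0 t_le1].
apply/convhullP; exists (k1 + k2)%N.
exists (catf (fun a => (1 - t) * w1 a) (fun b => t * w2 b)), (catf p1 p2).
split; [|split; [|split]].
- by move=> i; rewrite /catf; case: fintype.split => a; rewrite mulr_ge0 ?subr_ge0.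
- rewrite big_split_ord /=.
  under eq_bigr do rewrite catfL.
  under [X in _ + X]eq_bigr do rewrite catfR.
  by rewrite -!mulr_sumr w1_sum w2_sum !mulr1 subrK.
- by move=> i; rewrite /catf; case: fintype.split.
- rewrite big_split_ord /= !scaler_sumr; congr (_ + _); apply: eq_bigr => i _.
  + by rewrite !catfL scalerA.
  + by rewrite !catfR scalerA.
Qed.

Lemma convhull_mulmx (Q : 'M[R]_n) A x : (forall y, A y -> A (y *m Q)) ->
  convhull A x -> convhull A (x *m Q).
Proof.
move=> AQ /convhullP[k [w [p [w_ge0 [w_sum [Ap ->]]]]]].
apply/convhullP; exists k, w, (fun i => p i *m Q); do 3!(split => //).
  by move=> i; apply: AQ.
by rewrite mulmx_suml; apply: eq_bigr => i _; rewrite scalemxAl.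
Qed.

Lemma convk_widen k m A x : (k <= m)%N -> A !=set0 -> convk k A x -> convk m A x.
Proof.
move=> /subnKC <- [p0 Ap0] [w [p [w_ge0 [w_sum [Ap ->]]]]].
exists (catf w (fun=> 0)), (catf p (fun=> p0)).
split; [|split; [|split]].
- by move=> i; rewrite /catf; case: fintype.split.
- rewrite big_split_ord /= [X in _ + X]big1 => [|i _]; last by rewrite catfR.
  by rewrite addr0 -w_sum; apply: eq_bigr => i _; rewrite catfL.
- by move=> i; rewrite /catf; case: fintype.split.
- rewrite big_split_ord /= [X in _ + X]big1 => [|i _]; last by rewrite catfR scale0r.
  by rewrite addr0; apply: eq_bigr => i _; rewrite !catfL.
Qed.

Lemma affine_dependence k (p : 'I_k -> V) : (n.+1 < k)%N ->
  exists mu : 'I_k -> R,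
    [/\ exists j, 0 < mu j, \sum_i mu i *: p i = 0 & \sum_i mu i = 0].
Proof.
move=> n_lt_k.
set M : 'M[R]_(k, n + 1) := row_mx (\matrix_i p i) (const_mx 1).
have : kermx M != 0.
  rewrite -mxrank_eq0 mxrank_ker subn_eq0 -ltnNge.
  by apply: leq_ltn_trans (rank_leq_col M) _; rewrite addn1.
case/rowV0Pn => v /sub_kermxP; rewrite mul_mx_row -row_mx0 => /eq_row_mx [vp v1] v_neq0.
have v_sum : \sum_i v ord0 i = 0.
  move/matrixP: v1 => /(_ ord0 ord0); rewrite !mxE.
  by under eq_bigr do rewrite mxE mulr1.
exists (fun i => v ord0 i); split => //; last first.
  by apply: etrans vp; rewrite mulmx_sum_row; apply: eq_bigr => i _; rewrite rowK.
have [//|no_pos] := pselect (exists j, 0 < v ord0 j).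
have v_le0 j : 0 <= - v ord0 j.
  by rewrite oppr_ge0 leNgt; apply/negP => v_j; apply: no_pos; exists j.
suff v0 : v = 0 by rewrite v0 eqxx in v_neq0.
apply/rowP => i; rewrite mxE; apply/eqP.
rewrite -oppr_eq0; apply/eqP/(@psumr_eq0P _ _ predT (fun j => - v ord0 j)) => //.
by rewrite sumrN v_sum oppr0.
Qed.

(* Carathéodory's reduction: move along an affine dependence until a weight vanishes. *)
Lemma convk_shrink k A x : (n.+1 < k)%N -> convk k A x -> convk k.-1 A x.
Proof.
case: k => [//|k] n_lt_k [w [p [w_ge0 [w_sum [Ap ->]]]]].
have [mu [[j0 mu_j0] mu_p mu_sum]] := affine_dependence p n_lt_k.
case: (@arg_minP _ _ _ j0 (fun i => 0 < mu i) (fun i => w i / mu i) mu_j0).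
move=> j mu_j w_min; set s := w j / mu j.
have s_ge0 : 0 <= s by rewrite divr_ge0 // ltW.
set w' := fun i => w i - s * mu i.
have w'_ge0 i : 0 <= w' i.
  rewrite subr_ge0; have [mu_i|] := ltP 0 (mu i).
    by rewrite -ler_pdivlMr //; exact: w_min.
  by move/(mulr_ge0_le0 s_ge0)/le_trans; apply.
have w'_j : w' j = 0 by rewrite /w' /s divfK ?subrr // gt_eqF.
have w'_sum : \sum_i w' i = 1 by rewrite sumrB -mulr_sumr mu_sum mulr0 subr0.
have w'_comb : \sum_i w i *: p i = \sum_i w' i *: p i.
  under [RHS]eq_bigr do rewrite scalerBl -scalerA.
  by rewrite sumrB -scaler_sumr mu_p scaler0 subr0.
exists (fun i => w' (lift j i)), (fun i => p (lift j i)); do 2!split => //.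
  by move: w'_sum; rewrite (bigD1_ord j) //= w'_j add0r.
by rewrite w'_comb (bigD1_ord j) //= w'_j scale0r add0r.
Qed.

Lemma convhull_caratheodory A x : A !=set0 -> convhull A x -> convk n.+1 A x.
Proof.
move=> A0 /convhullP [k]; have [k_le|n_lt_k] := leqP k n.+1.
  exact: convk_widen.
rewrite -(subnKC (ltnW n_lt_k)); elim: (k - n.+1)%N => [|d IH]; first by rewrite addn0.
by move=> /convk_shrink; rewrite addnS ltnS leq_addr => /(_ isT) /IH.
Qed.

Lemma convk_split k A x : convk k.+2 A x ->
  exists t y c, [/\ 0 <= t <= 1, convk k.+1 A y, A c & x = (1 - t) *: y + t *: c].
Proof.
move=> [w [p [w_ge0 [w_sum [Ap ->]]]]].
rewrite big_ord_recr /= in w_sum; rewrite big_ord_recr /=.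
set t := w ord_max in w_sum *.
set S := \sum_(i < k.+1) _ in w_sum.
have t_le1 : t <= 1 by rewrite -w_sum lerDr sumr_ge0.
have [t1|t_neq1] := eqVneq t 1.
  exists 1, (p ord_max), (p ord_max); split; rewrite ?lexx ?ler01 //.
    by apply: (@convk_widen 1); [|exists (p ord_max)|apply/convk1].
  have S0 : S = 0 by apply: (addIr t); rewrite w_sum add0r t1.
  rewrite t1 subrr scale0r add0r big1 ?add0r // => i _.
  by rewrite (@psumr_eq0P _ _ predT (fun i => w (widen_ord _ i))) ?scale0r.
have t_gt0 : 0 < 1 - t by rewrite subr_gt0 lt_neqAle t_neq1 t_le1.
set w' := fun i : 'I_k.+1 => w (widen_ord (leqnSn k.+1) i) / (1 - t).
exists t, (\sum_i w' i *: p (widen_ord (leqnSn k.+1) i)), (p ord_max).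
split => //; first by rewrite t_le1 w_ge0.
  exists w', (fun i => p (widen_ord (leqnSn k.+1) i)); do !split => //.
    by move=> i; rewrite divr_ge0 // ltW.
  by rewrite -mulr_suml -/S (_ : S = 1 - t) ?divff ?gt_eqF // -w_sum addrK.
rewrite scaler_sumr; congr (_ + _); apply: eq_bigr => i _.
by rewrite scalerA mulrC divfK // gt_eqF.
Qed.

Definition lerp (z : R * (V * V)) : V := (1 - z.1) *: z.2.1 + z.1 *: z.2.2.

Lemma lerp_continuous : continuous lerp.
Proof.
move=> z; apply: cvgD; apply: cvgZ.
- by apply: cvgB; [exact: cvg_cst | exact: cvg_fst].
- exact: cvg_comp cvg_snd cvg_fst.
- exact: cvg_fst.
- exact: cvg_comp cvg_snd cvg_snd.
Qed.

(* By Carathéodory, [n] rounds of joining points with segments to [A] reach the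
   convex hull of [A]. *)
Fixpoint seg_iter A k : set V :=
  if k is k'.+1 then lerp @` (`[0, 1] `*` (seg_iter A k' `*` A)) else A.

Lemma compact_seg_iter A k : compact A -> compact (seg_iter A k).
Proof.
move=> cA; elim: k => //= k IH.
apply: continuous_compact; first exact/continuous_subspaceT/lerp_continuous.
by apply: compact_setX; [exact: segment_compact | exact: compact_setX].
Qed.

Lemma seg_iter_sub_convex A C k : is_convex C -> A `<=` C -> seg_iter A k `<=` C.
Proof.
move=> cC AC; elim: k => //= k IH x [[t [y c]] [/= t01 [/IH Cy /AC Cc]] <-].
by apply: cC => //; move: t01; rewrite /= in_itv.
Qed.

Lemma convk_sub_seg_iter A k : convk k.+1 A `<=` seg_iter A k.
Proof.
elim: k => [|k IH] x; first by move/convk1.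
move=> /convk_split [t [y [c [t01 /IH y_seg Ac ->]]]].
by exists (t, (y, c)); rewrite //= in_itv.
Qed.

Lemma compact_convhull A : A !=set0 -> compact A -> compact (convhull A).
Proof.
move=> A0 cA; have -> : convhull A = seg_iter A n.
  apply/seteqP; split => x.
    by move/(convhull_caratheodory A0)/convk_sub_seg_iter.
  by apply: seg_iter_sub_convex; [exact: convex_convhull | exact: sub_convhull].
exact: compact_seg_iter.
Qed.

End ConvexHull.

Section Averages.
Variables (R : realType) (n : nat).
Notation V := 'rV[R]_n.
Implicit Types (A : set V) (x : V).

Definition averages A N : set V :=
  [set x | exists s : seq V,
     [/\ size s = N, forall c, c \in s -> A c & x = N%:R^-1 *: \sum_(c <- s) c]].

Lemma averages1 A : averages A 1 `<=` A.
Proof.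
move=> x [[|c [|? ?]] [//= _ sA ->]].
by rewrite big_seq1 invr1 scale1r; apply: sA; rewrite mem_seq1.
Qed.

Lemma averages_double A N x : averages A (N + N) x ->
  exists a b, [/\ averages A N a, averages A N b & x = 2^-1 *: (a + b)].
Proof.
move=> [s [size_s sA ->]].
exists (N%:R^-1 *: \sum_(c <- take N s) c), (N%:R^-1 *: \sum_(c <- drop N s) c); split.
- exists (take N s); split => //; last by move=> c /mem_take /sA.
  by rewrite size_takel // size_s leq_addr.
- exists (drop N s); split => //; last by move=> c /mem_drop /sA.
  by rewrite size_drop size_s addnK.
- rewrite -scalerDr -big_cat cat_take_drop scalerA -invfM.
  by rewrite mulr_natl mulr2n natrD.
Qed.

Lemma averages_nat_weights A k (m : 'I_k -> nat) (c : 'I_k -> V) : (forall i, A (c i)) ->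
  averages A (\sum_i m i) ((\sum_i m i)%:R^-1 *: \sum_i (m i)%:R *: c i).
Proof.
move=> Ac; exists (flatten [seq nseq (m i) (c i) | i <- index_enum 'I_k]); split.
- rewrite size_flatten sumnE /shape -map_comp big_map.
  by apply: eq_bigr => i _; rewrite /= size_nseq.
- by move=> x /flattenP [_ /mapP [i _ ->]] /nseqP [-> _].
- congr (_ *: _); rewrite big_flatten big_map /=; apply: eq_bigr => i _.
  by rewrite big_nseq iter_addr_0 scaler_nat.
Qed.

(* Round all weights but the first down to multiples of [1/N]; the first absorbs the rest. *)
Lemma nat_round_weights k (w : 'I_k.+1 -> R) N : (0 < N)%N ->
  (forall i, 0 <= w i) -> \sum_i w i = 1 ->
  exists m : 'I_k.+1 -> nat, (\sum_i m i)%N = N /\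
    forall i, i != ord0 -> 0 <= w i - (m i)%:R / N%:R <= N%:R^-1.
Proof.
move=> N_gt0 w_ge0 w_sum; have N_pos : 0 < N%:R :> R by rewrite ltr0n.
set tr := fun i => Num.truncn (w i * N%:R).
set T := (\sum_(i | i != ord0) tr i)%N.
have T_le : (T <= N)%N.
  rewrite -(ler_nat R) /T natr_sum.
  apply: (@le_trans _ _ (\sum_i w i * N%:R)); last by rewrite -mulr_suml w_sum mul1r.
  rewrite [leRHS](bigD1 ord0) //= -[leLHS]add0r lerD ?mulr_ge0 //.
  by apply: ler_sum => i _; rewrite truncn_le mulr_ge0.
exists (fun i => if i == ord0 then (N - T)%N else tr i); split.
  rewrite (bigD1 ord0) //= (eq_bigr tr) => [|i /negPf -> //].
  by rewrite subnK.
move=> i /negPf ->; apply/andP; split.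
  by rewrite subr_ge0 ler_pdivrMr // truncn_le mulr_ge0.
rewrite lerBlDr -{1}[N%:R^-1]mul1r -mulrDl ler_pdivlMr // addrC natr1.
exact/ltW/truncnS_gt.
Qed.

Lemma convk_near_averages A k N D x : (0 < N)%N ->
  (forall a b, A a -> A b -> `|a - b| <= D) -> convk k.+1 A x ->
  exists2 y, averages A N y & `|x - y| <= k.+1%:R * (N%:R^-1 * D).
Proof.
move=> N_gt0 A_diam [w [c [w_ge0 [w_sum [Ac ->]]]]].
have N_pos : 0 < N%:R :> R by rewrite ltr0n.
have [m [m_sum m_round]] := nat_round_weights N_gt0 w_ge0 w_sum.
exists (N%:R^-1 *: \sum_i (m i)%:R *: c i).
  by have := averages_nat_weights m Ac; rewrite m_sum.
set e := fun i => w i - (m i)%:R / N%:R.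
have e_sum : \sum_i e i = 0.
  by rewrite sumrB w_sum -mulr_suml -natr_sum m_sum divff ?subrr ?gt_eqF.
have -> : \sum_i w i *: c i - N%:R^-1 *: \sum_i (m i)%:R *: c i =
    \sum_i e i *: (c i - c ord0).
  under [RHS]eq_bigr do rewrite scalerBr.
  rewrite sumrB -scaler_suml e_sum scale0r subr0 scaler_sumr -sumrB.
  by apply: eq_bigr => i _; rewrite scalerA scalerBl mulrC.
apply: le_trans (ler_norm_sum _ _ _) _.
apply: (@le_trans _ _ (\sum_(i < k.+1) N%:R^-1 * D)); last first.
  by rewrite sumr_const card_ord mulr_natl.
apply: ler_sum => i _; rewrite normrZ.
have D_ge0 : 0 <= D by apply: le_trans (A_diam _ _ (Ac ord0) (Ac ord0)).
have [->|i_neq0] := eqVneq i ord0.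
  by rewrite subrr normr0 mulr0 mulr_ge0 ?invr_ge0.
have /andP [e_ge0 e_le] := m_round i i_neq0.
by apply: ler_pM => //; [rewrite ger0_norm | exact: A_diam].
Qed.

End Averages.

Section Hausdorff.
Variables (R : realType) (n : nat).
Notation V := 'rV[R]_n.

Lemma enormZ t (u : V) : enorm (t *: u) = `|t| * enorm u.
Proof.
rewrite /enorm /dotv (eq_bigr (fun i => t ^+ 2 * (u ord0 i * u ord0 i))); last first.
  by move=> i _; rewrite !mxE mulrACA expr2.
by rewrite -mulr_sumr sqrtrM ?sqr_ge0 // sqrtr_sqr.
Qed.

Lemma enorm_le_mx_norm (u : V) : enorm u <= n.+1%:R * `|u|.
Proof.
rewrite /enorm -[leRHS]ger0_norm ?mulr_ge0 // -sqrtr_sqr ler_sqrt ?sqr_ge0 //.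
apply: (@le_trans _ _ (\sum_(i < n) `|u| * `|u|)).
  apply: ler_sum => i _; apply: le_trans (ler_norm _) _; rewrite normrM.
  by apply: ler_pM => //; rewrite [leRHS]mx_normrE; apply/bigmax_geP; right; exists (ord0, i).
rewrite sumr_const card_ord -[_ *+ n]mulr_natl exprMn -expr2 ler_wpM2r ?sqr_ge0 //.
by rewrite -natrX ler_nat; nia.
Qed.

Lemma hausdorff_le (A B : set V) eps : 0 < eps -> A `<=` B ->
  (forall x, B x -> exists2 y, A y & enorm (x - y) <= eps) ->
  0 <= hausdorff A B <= eps.
Proof.
move=> eps_gt0 AB B_near; rewrite /hausdorff; set E := [set e : R | _].
have E_lb : lbound E 0 by move=> e [].
have E_eps : E eps.
  split; first exact: ltW.
  split => x.
    move=> /AB Bx; exists x => //; exists 0; last by rewrite addr0.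
    by exists 0; rewrite ?scaler0 // /eball /= -(scale0r 0) enormZ normr0 mul0r.
  move=> /B_near [y Ay xy]; exists y => //; exists (x - y); last by rewrite addrC subrK.
  exists (eps^-1 *: (x - y)); last by rewrite scalerA divff ?scale1r ?gt_eqF.
  by rewrite /eball /= enormZ ger0_norm ?invr_ge0 ?(ltW eps_gt0) // ler_pdivrMl // mulr1.
apply/andP; split; first by apply: lb_le_inf => //; exists eps.
by apply: ge_inf => //; exists 0.
Qed.

End Hausdorff.

Lemma compact_diam_bound (R : realType) (V : normedModType R) (A : set V) :
  compact A -> exists2 D : R, 0 < D & forall a b, A a -> A b -> `|a - b| <= D.
Proof.
move=> /compact_bounded [M [_ AM]].
have A_le a : A a -> `|a| <= `|M| + 1 by apply: AM; rewrite ltr_pwDr // ler_norm.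
exists (`|M| + 1 + (`|M| + 1)) => [|a b Aa Ab]; first by rewrite addr_gt0 ?ltr_pwDr.
by apply: le_trans (ler_normB _ _) _; rewrite lerD ?A_le.
Qed.

Lemma cvg0_pow2_bound (R : realType) (u : nat -> R) (c : R) :
  (forall j, 0 <= u j.+1 <= c / (2 ^ j)%:R) -> u @ \oo --> 0.
Proof.
move=> u_bound.
apply: (@squeeze_cvgr _ _ _ _ (fun=> 0) (geometric (2 * c) 2^-1)).
- exists 1%N => // -[//|j] _; rewrite /geometric /= exprS mulrCA !mulrA.
  by rewrite mulVf ?pnatr_eq0 // mul1r exprVn -natrX.
- exact: cvg_cst.
- by apply: cvg_geometric; rewrite ger0_norm ?invr_ge0 // invf_lt1 // ltr1n.
Qed.

Section Symmetrization.
Variables (R : realType) (n : nat) (H : 'M[R]_n).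
Notation V := 'rV[R]_n.
Implicit Types (X : set V) (x : V).

Lemma MHE X : MH H X = (fun z => 2^-1 *: (z.1 + refl H z.2)) @` (X `*` X).
Proof.
apply/seteqP; split => x.
  by case=> _ [a Xa [_ [b Xb <-] <-]] <-; exists (a, b).
by case=> -[a b] [/= Xa Xb] <-; exists (a + refl H b) => //; exists a => //; exists (refl H b).
Qed.

Lemma compact_MH X : compact X -> compact (MH H X).
Proof.
move=> cX; rewrite MHE; apply: continuous_compact; last exact: compact_setX.
apply: continuous_subspaceT => z; apply: cvgZ; first exact: cvg_cst.
apply: cvgD; first exact: cvg_fst.
by apply: continuous_comp; [exact: cvg_snd | exact: refl_continuous].
Qed.

Lemma MH_midpoint X a b : X a -> X (refl H b) -> MH H X (2^-1 *: (a + b)).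
Proof. by move=> Xa Xb; rewrite MHE; exists (a, refl H b); rewrite //= reflK. Qed.

Lemma MH_neq0 X : X !=set0 -> MH H X !=set0.
Proof.
by move=> [a Xa]; exists (2^-1 *: (a + refl H a)); apply: MH_midpoint; rewrite ?reflK.
Qed.

Lemma MH_refl X x : MH H X x -> MH H X (refl H x).
Proof.
rewrite MHE => -[[a b] [/= Xa Xb] <-].
by rewrite reflZ reflD reflK addrC; exists (b, a).
Qed.

Lemma convhull_MH_refl X x : convhull (MH H X) x -> convhull (MH H X) (refl H x).
Proof.
rewrite reflE; apply: convhull_mulmx => y /MH_refl.
by rewrite reflE.
Qed.

Lemma H_symmetric_convhull_MH X : H_symmetric H (convhull (MH H X)).
Proof.
apply/seteqP; split => x; first by case=> y /convhull_MH_refl Ly <-.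
by move=> /convhull_MH_refl Lx; exists (refl H x); rewrite ?reflK.
Qed.

Lemma MH_sub_convex X L : is_convex L -> (forall y, L y -> L (refl H y)) ->
  X `<=` L -> MH H X `<=` L.
Proof.
move=> cL L_refl XL x; rewrite MHE => -[[a b] [/= /XL La /XL /L_refl Lb] <-].
have half_half : 1 - 2^-1 = 2^-1 :> R by rewrite {1}(splitr 1) mul1r addrK.
rewrite scalerDr -{1}half_half; apply: cL => //.
by rewrite invr_ge0 ler0n invf_le1 ?ler1n.
Qed.

Lemma iter_MH_sub_convhull K j : iter j.+1 (MH H) K `<=` convhull (MH H K).
Proof.
elim: j => [|j IH]; first exact: sub_convhull.
apply: MH_sub_convex IH; first exact: convex_convhull.
exact: convhull_MH_refl.
Qed.

Lemma averages_pow2_sub_iter_MH K j :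
  averages (MH H K) (2 ^ j) `<=` iter j.+1 (MH H) K.
Proof.
elim: j => [|j IH]; first exact: averages1.
move=> x; rewrite expnS mul2n -addnn => /averages_double [a [b [/IH Sa /IH Sb ->]]].
by apply: MH_midpoint => //; exact: MH_refl.
Qed.

Lemma hausdorff_iter_MH_le K :
  K !=set0 -> compact K -> exists c, forall j,
    0 <= hausdorff (iter j.+1 (MH H) K) (convhull (MH H K)) <= c / (2 ^ j)%:R.
Proof.
move=> K0 cK; have C0 : MH H K !=set0 := MH_neq0 K0.
have cC : compact (MH H K) := compact_MH cK.
have [D D_gt0 C_diam] := compact_diam_bound cC.
exists (n.+1%:R * (n.+1%:R * D)) => j; set N := (2 ^ j)%N.
have N_gt0 : (0 < N)%N by rewrite expn_gt0.
apply: hausdorff_le; first by rewrite !mulr_gt0 ?invr_gt0 ?ltr0n.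
  exact: iter_MH_sub_convhull.
move=> x /(convhull_caratheodory C0) /(convk_near_averages N_gt0 C_diam) [y Cy xy].
exists y; first exact: averages_pow2_sub_iter_MH.
apply: le_trans (enorm_le_mx_norm _) _; rewrite -!mulrA ler_wpM2l //.
by rewrite [D * _]mulrC.
Qed.

End Symmetrization.

Theorem theorem6 (R : realType) (n : nat) (K : set 'rV[R]_n) (H : 'M[R]_n) :
  K !=set0 -> compact K ->
  (1 <= \rank H)%N -> (\rank H <= n.-1)%N ->
  let L := convhull (MH H K) in
  [/\ H_symmetric H L, compact L, is_convex L &
      (fun m : nat => hausdorff (iter m (MH H) K) L) @ \oo --> (0 : R)].
Proof.
(* The argument works for every subspace [H]. *)
move=> K0 cK _ _ L.
have [c c_bound] := hausdorff_iter_MH_le H K0 cK.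
split.
- exact: H_symmetric_convhull_MH.
- exact/compact_convhull/compact_MH/cK/MH_neq0.
- exact: convex_convhull.
- exact: cvg0_pow2_bound c_bound.
Qed.
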